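(* Let $L^n_{\mathbb{C}}$ be the set of all $A\in M_n(\mathbb{C})$ such that the Schur map $S_A(B)=A\circ B$ on $M_n(\mathbb{C})$ is nonzero and multiplicative, regarded as a group under the Schur product, and let $(L^n_{\mathbb{C}})^{+}$ be the subgroup of those $A\in L^n_{\mathbb{C}}$ that are positive matrices. Then $L^n_{\mathbb{C}}$ is a complex Lie group of complex dimension $n-1$, and $(L^n_{\mathbb{C}})^{+}$ is a compact Lie group isomorphic (as a topological group) to the $(n-1)$-torus $\mathbb{T}^{n-1}$.
   Context: $A\circ B=(a_{ij}b_{ij})$ is the entrywise product; multiplicative means $S_A(BC)=S_A(B)S_A(C)$. A positive matrix is a Hermitian matrix with nonnegative spectrum. $\mathbb{T}$ is the circle group of complex numbers of modulus one. The topology is the one inherited from $M_n(\mathbb{C})$. *)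

From HB Require Import structures.
From mathcomp Require Import all_boot all_order all_algebra.
From mathcomp Require Import all_classical all_reals all_analysis.
From mathcomp Require Import complex.
Export numFieldNormedType.Exports.

Set Implicit Arguments.
Unset Strict Implicit.
Unset Printing Implicit Defensive.

Import Order.TTheory GRing.Theory Num.Theory.
Local Open Scope classical_set_scope.
Local Open Scope ring_scope.
Local Open Scope complex_scope.

(* Equip R[i] with its usual (modulus) metric topology, i.e. the one of the
   numFieldType R[i]; matrices 'M[R[i]]_(m,n) then carry the product
   topology = topology inherited from C^(m*n). *)
HB.instance Definition _ (R : realType) :=
  PseudoPointedMetric.copy R[i] (R[i])^o.

Section Defs.
Variable R : realType.
Local Notation C := (R[i]).

Definition schur (m n : nat) (A B : 'M[C]_(m, n)) : 'M[C]_(m, n) :=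
  \matrix_(i, j) (A i j * B i j).

Definition schur_map_nonzero (n : nat) (A : 'M[C]_n) : Prop :=
  exists B : 'M[C]_n, schur A B <> 0.

Definition schur_map_multiplicative (n : nat) (A : 'M[C]_n) : Prop :=
  forall B D : 'M[C]_n, schur A (B *m D) = schur A B *m schur A D.

Definition Lset (n : nat) : set 'M[C]_n :=
  [set A | schur_map_nonzero A /\ schur_map_multiplicative A].

Definition adjmx (n : nat) (A : 'M[C]_n) : 'M[C]_n := \matrix_(i, j) (A j i)^*.

Definition positive_mx (n : nat) (A : 'M[C]_n) : Prop :=
  adjmx A = A /\ (forall l : C, eigenvalue A l -> 0 <= l).

Definition Lplus (n : nat) : set 'M[C]_n :=
  [set A | @Lset n A /\ positive_mx A].

(* (C^x)^m as a subset of row vectors, group law = entrywise product *)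
Definition Cstar (m : nat) : set 'rV[C]_m :=
  [set z | forall j, z 0 j != 0].

Definition torus (m : nat) : set 'rV[C]_m :=
  [set z | forall j, `|z 0 j| = 1].

Definition rowmul (m : nat) (z w : 'rV[C]_m) : 'rV[C]_m :=
  \row_j (z 0 j * w 0 j).

End Defs.

Arguments Lset R n : clear implicits.
Arguments Lplus R n : clear implicits.
Arguments Cstar R m : clear implicits.
Arguments torus R m : clear implicits.

From HB Require Import structures.
From mathcomp Require Import all_boot all_order all_algebra.
From mathcomp Require Import all_classical all_reals all_analysis.
From mathcomp Require Import complex ring lra.
Import numFieldNormedType.Exports.
Import Order.TTheory GRing.Theory Num.Theory.
Local Open Scope classical_set_scope.
Local Open Scope ring_scope.
Local Open Scope complex_scope.
Set Implicit Arguments.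
Unset Strict Implicit.
Unset Printing Implicit Defensive.

(* Testing multiplicativity of S_A on matrix units gives a_ij = a_ik a_kj.
   Such a cocycle that is not zero has unit diagonal, so a_ij = w_i / w_j
   with w = (1, a_10, ..., a_(n-1)0); conversely S_A is then conjugation by
   diag(w), hence multiplicative.  Thus z |-> (w_i / w_j)_ij, w = (1, z), is
   a polynomial-in-(z, 1/z) group isomorphism (C^x)^(n-1) -> L^n_C whose left
   inverse reads off the first column.  Such a matrix is Hermitian iff every
   |z_j| = 1, and it is then the rank-one matrix w w^*, with eigenvalues 0 and
   n; so (L^n_C)^+ is the homeomorphic image of the compact torus. *)

Section SchurCocycle.
Variables (R : realType) (n : nat).
Local Notation C := (R[i]).

Definition mx_cocycle (A : 'M[C]_n) := forall i k j, A i j = A i k * A k j.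

Lemma schur_delta_mx (A : 'M[C]_n) i k :
  schur A (delta_mx i k) = A i k *: delta_mx i k.
Proof.
apply/matrixP => a b; rewrite !mxE.
by case: (a =P i) => [->|]; case: (b =P k) => [->|] /=; rewrite ?mulr1 ?mulr0.
Qed.

Lemma schur_multiplicative_cocycle (A : 'M[C]_n) :
  schur_map_multiplicative A -> mx_cocycle A.
Proof.
move=> HA i k j.
have := congr1 (fun M : 'M[C]_n => M i j) (HA (delta_mx i k) (delta_mx k j)).
rewrite mul_delta_mx !schur_delta_mx -scalemxAl -scalemxAr mul_delta_mx scalerA.
by rewrite !mxE !eqxx /= !mulr1 mulrC.
Qed.

Lemma schur_nonzero_entry (A : 'M[C]_n) :
  schur_map_nonzero A -> exists i j, A i j != 0.
Proof.
move=> [B AB]; apply/matrix0Pn; apply: contra_not_neq AB => ->.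
by apply/matrixP => i j; rewrite !mxE mul0r.
Qed.

Lemma cocycle_diag (A : 'M[C]_n) i0 j0 :
  mx_cocycle A -> A i0 j0 != 0 -> forall k, A k k = 1.
Proof.
move=> cA Aij k.
have Ai0 : A i0 i0 = 1.
  by apply: (mulIf Aij); rewrite mul1r -cA.
by rewrite (cA k i0 k) mulrC -cA.
Qed.

Lemma cocycle_inv (A : 'M[C]_n) :
  mx_cocycle A -> (forall k, A k k = 1) -> forall i k, A i k * A k i = 1.
Proof. by move=> cA A1 i k; rewrite -cA. Qed.

End SchurCocycle.

Section UnitCircle.
Variable R : realType.

Lemma sqrt_sumsq_le_sum_norm (p q : R) : Num.sqrt (p ^+ 2 + q ^+ 2) <= `|p| + `|q|.
Proof.
have pq0 : 0 <= `|p| + `|q| by rewrite addr_ge0.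
rewrite -(ger0_norm pq0) -sqrtr_sqr ler_sqrt ?sqr_ge0 //.
rewrite -(real_normK (num_real p)) -(real_normK (num_real q)).
by have := normr_ge0 p; have := normr_ge0 q; nra.
Qed.

Lemma complex_of_row2_continuous :
  continuous (fun v : 'rV[R]_2 => (v 0 0 +i* v 0 1) : R[i]).
Proof.
move=> v B /nbhs_ballP [e /= e0 He]; apply/nbhs_ballP.
move: e0; rewrite ltcE /= => /andP [/eqP Ime Ree].
exists (complex.Re e / 2); first by rewrite /= divr_gt0.
move=> w [_ vw]; apply: He.
have h0 : `|v 0 0 - w 0 0| < complex.Re e / 2 := vw 0 0.
have h1 : `|v 0 1 - w 0 1| < complex.Re e / 2 := vw 0 1.
change (`|(v 0 0 +i* v 0 1) - (w 0 0 +i* w 0 1)| < e).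
rewrite ltcE normc_def /= Ime eqxx /=.
by apply: le_lt_trans (sqrt_sumsq_le_sum_norm _ _) _; lra.
Qed.

Lemma unit_circle_closed : closed [set x : R[i] | `|x| = 1].
Proof.
apply: (@preimage_closed _ _ (fun x : R[i] => `|x|) [set 1]).
  by move=> x _; exact: (@norm_continuous _ (R[i] : numFieldType) x).
apply: accessible_closed_set1; apply: hausdorff_accessible.
exact: (@norm_hausdorff _ (R[i] : numFieldType)).
Qed.

(* The circle is a closed subset of the image of the square [-1, 1]^2. *)
Lemma unit_circle_compact : compact [set x : R[i] | `|x| = 1].
Proof.
pose square := [set v : 'rV[R]_2 | forall i, (fun=> `[-1, 1]%classic) i (v ord0 i)].
have square_compact : compact square.
  by apply: rV_compact => i; exact: segment_compact.
have := continuous_compact (continuous_subspaceT complex_of_row2_continuous)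
  square_compact.
move/(subclosed_compact unit_circle_closed); apply.
move=> [a b] /= ab1.
have ab2 : a ^+ 2 + b ^+ 2 = 1.
  by have := add_Re2_Im2 (a +i* b); rewrite ab1 expr1n => /(congr1 (@complex.Re R)).
exists (\row_(i < 2) [:: a; b]`_i); last by rewrite !mxE.
move=> i; rewrite mxE /= in_itv /=.
by case: i => [[|[|//]] ?] /=; apply/andP; split; nra.
Qed.

Lemma torus_compact m : compact (torus R m).
Proof. exact: (rV_compact (fun _ => unit_circle_compact)). Qed.

Lemma torus_Cstar m (z : 'rV[R[i]]_m) : torus R m z -> Cstar R m z.
Proof. by move=> z1 j; rewrite -normr_eq0 z1 oner_eq0. Qed.

End UnitCircle.

Section RatioMatrix.
Variables (R : realType) (m : nat).
Local Notation C := (R[i]).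
Implicit Types (z w : 'rV[C]_m) (A : 'M[C]_m.+1).

Definition homog z (i : 'I_m.+1) : C :=
  if unlift ord0 i is Some j then z 0 j else 1.

Definition ratio_mx z : 'M[C]_m.+1 := \matrix_(i, j) (homog z i / homog z j).

Definition col0_below A : 'rV[C]_m := \row_j A (lift ord0 j) ord0.

Lemma homog0 z : homog z ord0 = 1.
Proof. by rewrite /homog unlift_none. Qed.

Lemma homog_lift z j : homog z (lift ord0 j) = z 0 j.
Proof. by rewrite /homog liftK. Qed.

Lemma homog_rowmul z w i : homog (rowmul z w) i = homog z i * homog w i.
Proof. by rewrite /homog; case: unlift => [j|]; rewrite ?mxE ?mulr1. Qed.

Lemma homog_neq0 z : Cstar R m z -> forall i, homog z i != 0.
Proof. by move=> z0 i; rewrite /homog; case: unlift => [j|]; rewrite ?oner_neq0. Qed.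

Lemma homog_norm z : torus R m z -> forall i, `|homog z i| = 1.
Proof. by move=> z1 i; rewrite /homog; case: unlift => [j|]; rewrite ?normr1. Qed.

Lemma ratio_mxK : cancel ratio_mx col0_below.
Proof. by move=> z; apply/rowP => j; rewrite !mxE homog_lift homog0 invr1 mulr1. Qed.

Lemma ratio_mx_rowmul z w : ratio_mx (rowmul z w) = schur (ratio_mx z) (ratio_mx w).
Proof. by apply/matrixP => i j; rewrite !mxE !homog_rowmul invfM mulrACA. Qed.

Lemma ratio_mx_Lset z : Cstar R m z -> Lset R m.+1 (ratio_mx z).
Proof.
move=> z0; split.
  exists 1%:M => /matrixP /(_ ord0 ord0).
  by rewrite !mxE homog0 eqxx invr1 !mulr1 => /eqP; rewrite oner_eq0.
move=> B D; apply/matrixP => i j; rewrite !mxE mulr_sumr; apply: eq_bigr => k _.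
rewrite !mxE; have := homog_neq0 z0 k; have := homog_neq0 z0 j => zj zk.
by field; rewrite zj zk.
Qed.

Lemma cocycle_ratio_mx A :
  mx_cocycle A -> (forall k, A k k = 1) ->
  Cstar R m (col0_below A) /\ ratio_mx (col0_below A) = A.
Proof.
move=> cA A1; have Ainv := cocycle_inv cA A1.
have A0_neq0 k : A k ord0 != 0.
  by apply: contra_eq_neq (Ainv k ord0) => ->; rewrite mul0r eq_sym oner_neq0.
have homogE i : homog (col0_below A) i = A i ord0.
  by rewrite /homog; case: unliftP => [k ->|->]; rewrite ?mxE ?A1.
split=> [j|]; first by rewrite mxE.
apply/matrixP => i j; rewrite mxE !homogE (cA i ord0 j); congr (_ * _).
by apply: (mulIf (A0_neq0 j)); rewrite mulVf // mulrC Ainv.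
Qed.

Lemma Lset_ratio_mx A : Lset R m.+1 A -> exists2 z, Cstar R m z & ratio_mx z = A.
Proof.
move=> [/schur_nonzero_entry [i [j Aij]] /schur_multiplicative_cocycle cA].
have [z0 zA] := cocycle_ratio_mx cA (cocycle_diag cA Aij).
by exists (col0_below A).
Qed.

Lemma image_Cstar_ratio_mx : ratio_mx @` Cstar R m = Lset R m.+1.
Proof.
apply/seteqP; split => [_ [z z0 <-]|A LA]; first exact: ratio_mx_Lset.
by have [z z0 zA] := Lset_ratio_mx LA; exists z.
Qed.

Lemma homog_differentiable i z :
  differentiable (fun z : 'rV[C]_m => (homog z i : (C : numFieldType))) z.
Proof.
by rewrite /homog; case: unlift => [j|]; [exact: differentiable_coord | exact: differentiable_cst].
Qed.

Lemma ratio_mx_differentiable z : Cstar R m z -> differentiable ratio_mx z.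
Proof.
move=> z0.
have -> : ratio_mx = \sum_i \sum_j
    (fun w => (homog w i / homog w j) *: (delta_mx i j : 'M[C]_m.+1)).
  apply/funext => w; rewrite {1}(matrix_sum_delta (ratio_mx w)) fct_sumE.
  by apply: eq_bigr => i _; rewrite fct_sumE; apply: eq_bigr => j _; rewrite mxE.
apply: differentiable_sum => i; apply: differentiable_sum => j; apply: differentiableZl.
exact: differentiableM (homog_differentiable i z)
  (differentiableV (homog_differentiable j z) (homog_neq0 z0 j)).
Qed.

Lemma col0_below_differentiable A : differentiable col0_below A.
Proof.
have -> : col0_below = \sum_i \sum_j
    (fun B : 'M[C]_m.+1 => B (lift ord0 j) ord0 *: (delta_mx i j : 'rV[C]_m)).
  apply/funext => B; rewrite {1}(matrix_sum_delta (col0_below B)) fct_sumE.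
  by apply: eq_bigr => i _; rewrite fct_sumE; apply: eq_bigr => j _; rewrite mxE.
apply: differentiable_sum => i; apply: differentiable_sum => j.
exact/differentiableZl/differentiable_coord.
Qed.

Lemma ratio_mx_continuous_on_torus : {within torus R m, continuous ratio_mx}.
Proof.
rewrite continuous_subspace_in => z /set_mem z1.
apply: continuous_subspaceT_for => //.
exact: differentiable_continuous (ratio_mx_differentiable (torus_Cstar z1)).
Qed.

Lemma col0_below_continuous (S : set 'M[C]_m.+1) : {within S, continuous col0_below}.
Proof.
apply: continuous_subspaceT => A.
exact: differentiable_continuous (col0_below_differentiable A).
Qed.

(* With w := homog z, a left eigenvector v satisfies l v_j w_j = s for
   s = sum_i v_i w_i; summing over j gives l s = (m + 1) s. *)
Lemma ratio_mx_eigenvalue z l :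
  Cstar R m z -> eigenvalue (ratio_mx z) l -> l = 0 \/ l = m.+1%:R.
Proof.
move=> z0 /eigenvalueP [v vA v0].
pose s := \sum_i v 0 i * homog z i.
have lvE j : l * v 0 j * homog z j = s.
  have := congr1 (fun M : 'rV_m.+1 => M 0 j) vA; rewrite !mxE => <-.
  rewrite mulr_suml; apply: eq_bigr => i _.
  by rewrite !mxE -!mulrA mulVf ?mulr1 ?homog_neq0.
have [s0|s_neq0] := eqVneq s 0.
  have /rV0Pn [j vj] := v0.
  left; move/eqP: (lvE j); rewrite s0 !mulf_eq0 (negbTE vj) (negbTE (homog_neq0 z0 j)).
  by rewrite !orbF => /eqP.
right; apply: (mulIf s_neq0); rewrite mulr_natl.
have -> : s *+ m.+1 = \sum_(j < m.+1) s by rewrite sumr_const card_ord.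
by rewrite {1}/s mulr_sumr; apply: eq_bigr => j _; rewrite mulrA lvE.
Qed.

Lemma adjmx_ratio_mx z : torus R m z -> adjmx (ratio_mx z) = ratio_mx z.
Proof.
move=> z1; apply/matrixP => i j; rewrite !mxE.
have conjE k : (homog z k)^* = (homog z k)^-1.
  by rewrite invc_norm homog_norm // expr1n invr1 mul1r.
by rewrite rmorphM /= fmorphV /= !conjE invrK mulrC.
Qed.

Lemma ratio_mx_Lplus z : torus R m z -> Lplus R m.+1 (ratio_mx z).
Proof.
move=> z1; have z0 := torus_Cstar z1.
split; first exact: ratio_mx_Lset.
by split=> [|l /(ratio_mx_eigenvalue z0) [->|->] //]; exact: adjmx_ratio_mx.
Qed.

Lemma Lplus_ratio_mx A : Lplus R m.+1 A -> exists2 z, torus R m z & ratio_mx z = A.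
Proof.
move=> [LA [AH _]]; have [z z0 zA] := Lset_ratio_mx LA; exists z => // j.
have := congr1 (fun M : 'M[C]_m.+1 => M (lift ord0 j) ord0) AH.
rewrite -zA !mxE homog_lift homog0 invr1 mulr1 mul1r => zjE.
have conj_zj : (z 0 j)^* = (z 0 j)^-1 by rewrite -{1}zjE conjcK.
have : `|z 0 j| ^+ 2 = 1 by rewrite sqr_normc conj_zj mulfV.
by move/eqP; rewrite sqrp_eq1 // => /eqP.
Qed.

Lemma image_torus_ratio_mx : ratio_mx @` torus R m = Lplus R m.+1.
Proof.
apply/seteqP; split => [_ [z z1 <-]|A PA]; first exact: ratio_mx_Lplus.
by have [z z1 zA] := Lplus_ratio_mx PA; exists z.
Qed.

End RatioMatrix.

Unset Implicit Arguments.

Theorem proposition3p3 (R : realType) (n : nat) (hn : (0 < n)%N) :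
  (exists (f : 'rV[R[i]]_(n.-1) -> 'M[R[i]]_n) (g : 'M[R[i]]_n -> 'rV[R[i]]_(n.-1)),
      [/\ f @` Cstar R (n.-1) = Lset R n,
          {in Cstar R (n.-1) &, forall z w, f (rowmul z w) = schur (f z) (f w)},
          (forall z, Cstar R (n.-1) z -> differentiable f z),
          (forall A, Lset R n A -> differentiable g A)
        & (forall z, Cstar R (n.-1) z -> g (f z) = z)])
  /\
  (compact (Lplus R n) /\
   exists (h : 'rV[R[i]]_(n.-1) -> 'M[R[i]]_n) (k : 'M[R[i]]_n -> 'rV[R[i]]_(n.-1)),
      [/\ h @` torus R (n.-1) = Lplus R n,
          {in torus R (n.-1) &, forall z w, h (rowmul z w) = schur (h z) (h w)},
          {within torus R (n.-1), continuous h},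
          {within Lplus R n, continuous k}
        & (forall z, torus R (n.-1) z -> k (h z) = z)]).
Proof.
case: n hn => [//|m] _ /=.
split.
  exists (@ratio_mx R m), (@col0_below R m); split.
  - exact: image_Cstar_ratio_mx.
  - by move=> z w _ _; exact: ratio_mx_rowmul.
  - by move=> z; exact: ratio_mx_differentiable.
  - by move=> A _; exact: col0_below_differentiable.
  - by move=> z _; exact: ratio_mxK.
split.
  rewrite -image_torus_ratio_mx.
  exact: continuous_compact (@ratio_mx_continuous_on_torus R m) (@torus_compact R m).
exists (@ratio_mx R m), (@col0_below R m); split.
- exact: image_torus_ratio_mx.
- by move=> z w _ _; exact: ratio_mx_rowmul.
- exact: ratio_mx_continuous_on_torus.
- exact: col0_below_continuous.
- by move=> z _; exact: ratio_mxK.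
Qed.
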